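(* The family $\Sigma_n$ is $\left(\frac n4,\frac n4\right)$-spread.
   Context: $\Sigma_n$ is the set of permutations of $[n]$, each identified with its graph $\{(i,\sigma(i)):i\in[n]\}$, so $\Sigma_n\subset{[n]^2\choose n}$. For a family $\mathcal{F}$ of subsets of $[n]^2$ and $X\subset[n]^2$, $\mathcal{F}(X):=\{F\setminus X: X\subset F\in\mathcal{F}\}$. $\mathcal{F}$ is $r$-spread if $|\mathcal{F}(X)|\le r^{-|X|}|\mathcal{F}|$ for all $X\subset[n]^2$, and $(r,q)$-spread if $\mathcal{F}(A)$ is $r$-spread for every $A\subset[n]^2$ with $|A|\le q$. *)

From mathcomp Require Import all_boot all_order all_algebra all_fingroup.
Set Implicit Arguments. Unset Strict Implicit. Unset Printing Implicit Defensive.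
Import Order.TTheory GRing.Theory Num.Theory.
Local Open Scope ring_scope.

Definition grid (n : nat) : finType := ('I_n * 'I_n)%type.

Definition perm_graph (n : nat) (s : 'S_n) : {set grid n} :=
  [set (i, s i) | i : 'I_n].

Definition Sigma (n : nat) : {set {set grid n}} :=
  [set perm_graph s | s : 'S_n].

Definition link (T : finType) (F : {set {set T}}) (X : {set T}) : {set {set T}} :=
  [set S :\: X | S in F & X \subset S].

Definition spread (T : finType) (r : rat) (F : {set {set T}}) : Prop :=
  forall X : {set T}, (#|link F X|%:R : rat) <= r ^- #|X| * (#|F|%:R).

Definition spread2 (T : finType) (r q : rat) (F : {set {set T}}) : Prop :=
  forall A : {set T}, (#|A|%:R : rat) <= q -> spread r (link F A).

From mathcomp Require Import all_boot all_order all_algebra all_fingroup.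
From mathcomp Require Import zify.
Import GRing.Theory Num.Theory.

Set Implicit Arguments.
Unset Strict Implicit.
Unset Printing Implicit Defensive.

(* A set B of cells of the grid lies in some permutation graph only if it is a
   partial permutation, and then exactly (n - |B|)! permutations extend it.
   Since a link of a link of Sigma_n is a link of a union of disjoint sets (or
   empty), the spread condition for |A| = a <= n/4 and |X| = x reduces to
   n^x (n - a - x)! <= 4^x (n - a)!, that is (n/4)^x <= m^_x for m = n - a.
   As 4m >= 3n, this follows from m^x <= 3^x m^_x, which in turn comes from
   (1 + 1/k)^j <= 3 for j <= k. *)

(* (1 + 1/k)^j <= 1 + j/k + (j/k)^2 for j <= k: an elementary substitute
   for (1 + 1/k)^k < e that survives induction on j. *)
Lemma expSn_sqr_le k j : j <= k ->
  k.+1 ^ j * k ^ 2 <= k ^ j * (k ^ 2 + j * k + j ^ 2).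
Proof.
elim: j => [|j IHj] ltjk; first by rewrite !expn0 !mul1n mul0n !addn0.
have step : k.+1 * (k ^ 2 + j * k + j ^ 2) <= k * (k ^ 2 + j.+1 * k + j.+1 ^ 2).
  by nia.
rewrite expnS -mulnA (leq_trans (leq_mul (leqnn k.+1) (IHj (ltnW ltjk)))) //.
by rewrite mulnCA [k ^ j.+1]expnS [k * _]mulnC -mulnA leq_mul2l step orbT.
Qed.

Lemma expSn_le3 k j : j <= k -> k.+1 ^ j <= 3 * k ^ j.
Proof.
move=> lejk; case: (posnP k) => [k0 | k_gt0].
  by move: lejk; rewrite k0 leqn0 => /eqP ->.
rewrite -(@leq_pmul2r (k ^ 2)) ?expn_gt0 ?k_gt0 //.
apply: (leq_trans (expSn_sqr_le lejk)).
by rewrite [3 * _]mulnC -mulnA leq_mul2l; apply/orP; right; nia.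
Qed.

Lemma expn_le3_ffact m x : x <= m -> m ^ x <= 3 ^ x * m ^_ x.
Proof.
elim: x m => [|x IHx] [|k] //= lexk.
rewrite ltnS in lexk.
rewrite ffactSS !expnS [X in _ <= X]mulnCA leq_mul2l /=.
apply: (leq_trans (expSn_le3 lexk)).
by rewrite -mulnA leq_mul2l IHx.
Qed.

Lemma expn_mul_fact_le n a x : 4 * a <= n -> x <= n - a ->
  n ^ x * (n - a - x)`! <= 4 ^ x * (n - a)`!.
Proof.
move=> le4an; set m := n - a => lexm.
have [-> | x_gt0] := posnP x; first by rewrite !expn0 subn0.
have le3n4m : 3 ^ x * n ^ x <= 3 ^ x * (4 ^ x * m ^_ x).
  rewrite -expnMn (@leq_trans ((4 * m) ^ x)) // ?leq_exp2r //; first by lia.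
  by rewrite expnMn mulnCA leq_mul2l expn_le3_ffact ?orbT.
rewrite leq_mul2l expn_eq0 /= in le3n4m.
by rewrite -(ffact_fact lexm) mulnA leq_mul2r le3n4m orbT.
Qed.

Lemma ler_nat_expV_mul (R : numFieldType) (c d k n x : nat) :
  0 < n ^ x -> c * n ^ x <= k ^ x * d ->
  ((c%:R : R) <= (n%:R / k%:R) ^- x * d%:R)%R.
Proof.
move=> nx_gt0 le_cd; rewrite -exprVn invf_div expr_div_n mulrAC.
by rewrite -!natrX ler_pdivlMr ?ltr0n // -!natrM ler_nat.
Qed.

Section Links.
Variables (T : finType) (F : {set {set T}}).

Lemma card_link A : #|link F A| = #|[set S in F | A \subset S]|.
Proof.
apply: card_in_imset => S S'; rewrite !inE => /andP[_ sAS] /andP[_ sAS'] eqSS'.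
by rewrite -(setID S A) -(setID S' A) (setIidPr sAS) (setIidPr sAS') eqSS'.
Qed.

Lemma link_link A X :
  link (link F A) X = if [disjoint A & X] then link F (A :|: X) else set0.
Proof.
apply/setP => U; rewrite /link; case: ifP => [dAX | ndAX]; last first.
  rewrite in_set0; apply/negbTE/imsetP => -[V]; rewrite inE => /andP[VA].
  by case/imsetP: VA => S _ ->; rewrite subsetD disjoint_sym ndAX andbF.
apply/imsetP/imsetP => [[V] | [S]]; rewrite inE.
  case/andP=> VA sXV ->; case/imsetP: VA sXV => S; rewrite inE.
  case/andP=> FS sAS -> sXSA; exists S; last by rewrite setDDl.
  by rewrite inE FS subUset sAS (subset_trans sXSA (subsetDl _ _)).
case/andP=> FS; rewrite subUset => /andP[sAS sXS] ->.
exists (S :\: A); last by rewrite setDDl.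
rewrite inE subsetD sXS disjoint_sym dAX !andbT.
by apply/imsetP; exists S; rewrite // inE FS.
Qed.

End Links.

Section PermutationGraphs.
Variable n : nat.

Definition extending_perms (B : {set grid n}) : {set 'S_n} :=
  [set s | B \subset perm_graph s].

Lemma mem_perm_graph (s : 'S_n) i j : ((i, j) \in perm_graph s) = (s i == j).
Proof. by apply/imsetP/eqP => [[k _ [-> ->]] | <-]; last exists i. Qed.

Lemma perm_graph_inj : injective (@perm_graph n).
Proof.
move=> s t eq_st; apply/permP => i; apply/eqP.
by rewrite -mem_perm_graph eq_st mem_perm_graph.
Qed.

Lemma card_perm_graph (s : 'S_n) : #|perm_graph s| = n.
Proof. by rewrite card_imset ?card_ord // => i j []. Qed.

Lemma card_link_Sigma B : #|link (Sigma n) B| = #|extending_perms B|.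
Proof.
rewrite card_link -(card_imset _ perm_graph_inj); apply: eq_card => S.
rewrite inE; apply/andP/imsetP => [[/imsetP[s _ ->] sBS] | [s]].
  by exists s; rewrite ?inE.
by rewrite inE => sBs ->; split; first exact: imset_f.
Qed.

Lemma card_extending_perms (B : {set grid n}) (s0 : 'S_n) :
  B \subset perm_graph s0 -> #|extending_perms B| = (n - #|B|)`!.
Proof.
move=> sBs0; set D := [set p.1 | p in B].
have graphB p : p \in B -> p = (p.1, s0 p.1).
  move=> /(subsetP sBs0); case: p => i j /=; rewrite mem_perm_graph.
  by move/eqP->.
have cardD : #|D| = #|B|.
  by apply: card_in_imset => p q /graphB-> /graphB-> /= ->.
have -> : extending_perms B = (fun t => t * s0)%g @: perm_on (~: D).
  apply/setP => s; rewrite inE; apply/idP/imsetP => [sBs | [t t_on ->]].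
    exists (s * s0^-1)%g; last by rewrite mulgKV.
    apply/subsetP => i; rewrite !inE permM; apply: contraNN => /imsetP[p pB ->].
    move: (subsetP sBs p pB); rewrite {1}(graphB p pB) mem_perm_graph.
    by move/eqP->; rewrite permK.
  apply/subsetP => p pB; rewrite (graphB p pB) mem_perm_graph permM.
  by rewrite (out_perm t_on) // inE negbK imset_f.
rewrite card_imset; last exact: mulIg.
by rewrite card_perm -cardD -[n in n - _]card_ord -(cardsC D) addKn.
Qed.

Lemma card_link_SigmaU_le (A X : {set grid n}) :
  [disjoint A & X] -> 4 * #|A| <= n ->
  ((#|link (Sigma n) (A :|: X)|%:R : rat)
     <= (n%:R / 4) ^- #|X| * #|link (Sigma n) A|%:R)%R.
Proof.
move=> dAX le4An; rewrite !card_link_Sigma.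
have [-> | [s0]] := set_0Vmem (extending_perms (A :|: X)).
  by rewrite cards0 mulr_ge0 ?invr_ge0 ?exprn_ge0 ?divr_ge0 ?ler0n.
rewrite inE => sAXs0; have sAs0 := subset_trans (subsetUl A X) sAXs0.
have := subset_leq_card sAXs0.
rewrite (card_extending_perms sAXs0) (card_extending_perms sAs0) card_perm_graph.
rewrite cardsU (disjoint_setI0 dAX) cards0 subn0 subnDA => leAXn.
apply: ler_nat_expV_mul; first by rewrite expn_gt0; apply/orP; lia.
by rewrite mulnC expn_mul_fact_le //; lia.
Qed.

End PermutationGraphs.

Local Open Scope ring_scope.

Theorem lemma12 (n : nat) :
  spread2 ((n%:R : rat) / 4) ((n%:R : rat) / 4) (Sigma n).
Proof.
move=> A leAn4 X; rewrite link_link.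
case: ifP => [dAX | _]; last first.
  by rewrite cards0 mulr_ge0 ?invr_ge0 ?exprn_ge0 ?divr_ge0 ?ler0n.
apply: card_link_SigmaU_le => //.
by rewrite ler_pdivlMr // -natrM ler_nat mulnC in leAn4.
Qed.
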